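(* If $\mathbb{K}=(K,+,0)$ is a positive commutative monoid that is weakly cancellative and totally canonically pre-ordered, then $\mathbb{K}$ has the transportation property.
   Context: Positive: $p+q=0$ implies $p=q=0$. The canonical pre-order: $b\sqsubseteq c$ iff $b+a=c$ for some $a\in K$. Weakly cancellative: $a+b=a+c$ implies $b=c$ or $b=0$ or $c=0$. Totally canonically pre-ordered: for all $b,c$, $b\sqsubseteq c$ or $c\sqsubseteq b$. Transportation property: for all positive integers $m,n$ and all $b\in K^m$, $c\in K^n$ with $b_1+\dots+b_m=c_1+\dots+c_n$, there exists $(d_{ij})\in K^{m\times n}$ with $\sum_{j}d_{ij}=b_i$ for all $i\in[m]$ and $\sum_i d_{ij}=c_j$ for all $j\in[n]$. *)

From mathcomp Require Import all_boot all_algebra.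
Set Implicit Arguments. Unset Strict Implicit. Unset Printing Implicit Defensive.
Import GRing.Theory.
Local Open Scope ring_scope.

(* A commutative monoid (K,+,0) is an nmodType in MathComp. *)

Definition positive_monoid (K : nmodType) : Prop :=
  forall p q : K, p + q = 0 -> p = 0 /\ q = 0.

Definition canon_le (K : nmodType) (b c : K) : Prop :=
  exists a : K, b + a = c.

Definition weakly_cancellative (K : nmodType) : Prop :=
  forall a b c : K, a + b = a + c -> b = c \/ b = 0 \/ c = 0.

Definition totally_canonically_preordered (K : nmodType) : Prop :=
  forall b c : K, canon_le b c \/ canon_le c b.

Definition transportation_property (K : nmodType) : Prop :=
  forall (m n : nat), (0 < m)%N -> (0 < n)%N ->
  forall (b : 'I_m -> K) (c : 'I_n -> K),
    \sum_(i < m) b i = \sum_(j < n) c j ->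
    exists d : 'I_m -> 'I_n -> K,
      (forall i : 'I_m, \sum_(j < n) d i j = b i) /\
      (forall j : 'I_n, \sum_(i < m) d i j = c j).

(* Northwest-corner rule, by induction on the numbers of rows and columns.
   By totality we may assume b_m ⊑ c_n, say c_n = b_m + a (otherwise transpose).
   Weak cancellation applied to
     b_m + (b_1 + ... + b_(m-1)) = b_m + (c_1 + ... + c_(n-1) + a)
   leaves three cases: either the remaining sums agree, and we ship all of b_m
   to column n and recurse with c_n replaced by a; or one remaining sum is 0,
   and positivity makes all other supplies (resp. demands) vanish, so a single
   row (resp. column) carries everything. *)

From mathcomp Require Import all_boot all_algebra.
Set Implicit Arguments. Unset Strict Implicit. Unset Printing Implicit Defensive.
Import GRing.Theory.
Local Open Scope ring_scope.

Section TransportPlans.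
Variable K : nmodType.

Definition transport_plan (m n : nat) (b c : nat -> K) (d : nat -> nat -> K) :=
  (forall i, (i < m)%N -> \sum_(j < n) d i j = b i) /\
  (forall j, (j < n)%N -> \sum_(i < m) d i j = c j).

Definition transportable (m n : nat) :=
  forall b c : nat -> K, \sum_(i < m) b i = \sum_(j < n) c j ->
  exists d, transport_plan m n b c d.

Lemma transport_plan_tr m n (b c : nat -> K) (d : nat -> nat -> K) :
  transport_plan m n b c d -> transport_plan n m c b (fun j i => d i j).
Proof. by case. Qed.

Lemma transportable_tr m n : transportable n m -> transportable m n.
Proof.
move=> Tnm b c Ebc; have [d /transport_plan_tr plan_d] := Tnm c b (esym Ebc).
by exists (fun i j => d j i).
Qed.

Lemma sum_ord_last n (F : nat -> K) :
  \sum_(j < n.+1) F j = \sum_(j < n) F j + F n.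
Proof. by rewrite big_ord_recr. Qed.

Lemma sum_if_last n (F : nat -> K) (x : K) :
  \sum_(j < n.+1) (if (j : nat) == n then x else F j) = \sum_(j < n) F j + x.
Proof.
rewrite big_ord_recr /= eqxx; congr (_ + _).
by apply: eq_bigr => j _; rewrite (ltn_eqF (ltn_ord j)).
Qed.

Lemma sum_delta_last n (x : K) :
  \sum_(j < n.+1) (if (j : nat) == n then x else 0) = x.
Proof.
rewrite big_ord_recr /= eqxx big1 ?add0r // => j _.
by rewrite (ltn_eqF (ltn_ord j)).
Qed.

Lemma transport_plan_last_row m n (b c : nat -> K) :
  (forall i, (i < m)%N -> b i = 0) ->
  \sum_(i < m.+1) b i = \sum_(j < n) c j ->
  transport_plan m.+1 n b c (fun i j => if i == m then c j else 0).
Proof.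
move=> b0 Ebc; split=> [i | j _]; last by rewrite sum_delta_last.
rewrite ltnS leq_eqVlt => /predU1P[-> | ltim].
  by rewrite eqxx -Ebc sum_ord_last big1 ?add0r // => k _; exact: b0.
by rewrite (ltn_eqF ltim) big1 ?b0.
Qed.

Lemma transport_plan_corner m n (b c : nat -> K) (a : K) (d : nat -> nat -> K) :
  c n = b m + a ->
  transport_plan m n.+1 b (fun j => if j == n then a else c j) d ->
  transport_plan m.+1 n.+1 b c
    (fun i j => if i == m then (if j == n then b m else 0) else d i j).
Proof.
move=> cn [rows cols]; split=> [i | j ltjn].
  rewrite ltnS leq_eqVlt => /predU1P[-> | ltim]; first by rewrite eqxx sum_delta_last.
  by rewrite (ltn_eqF ltim) rows.
rewrite big_ord_recr /= eqxx (eq_bigr (fun i : 'I_m => d i j)); last first.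
  by move=> i _; rewrite (ltn_eqF (ltn_ord i)).
rewrite cols //; move: ltjn; rewrite ltnS leq_eqVlt => /predU1P[-> | ltjn].
  by rewrite !eqxx cn addrC.
by rewrite (ltn_eqF ltjn) addr0.
Qed.

Section Positive.
Hypothesis pos : positive_monoid K.

Lemma sum_eq0 m (F : nat -> K) :
  \sum_(i < m) F i = 0 -> forall i, (i < m)%N -> F i = 0.
Proof.
elim: m => [|m IHm] // /[!sum_ord_last] /pos[sum_m0 Fm0] i.
by rewrite ltnS leq_eqVlt => /predU1P[-> // | ltim]; exact: IHm sum_m0 i ltim.
Qed.

Lemma transportable0n n : transportable 0 n.
Proof.
move=> b c /esym /[!big_ord0] /sum_eq0 c0.
by exists (fun _ _ => 0); split=> // j /c0 ->; rewrite big_ord0.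
Qed.

Hypothesis wc : weakly_cancellative K.

Lemma transportable_corner m n (b c : nat -> K) (a : K) :
  transportable m n.+1 ->
  \sum_(i < m.+1) b i = \sum_(j < n.+1) c j -> c n = b m + a ->
  exists d, transport_plan m.+1 n.+1 b c d.
Proof.
move=> Tmn Ebc cn.
have : b m + \sum_(i < m) b i = b m + (\sum_(j < n) c j + a).
  by rewrite addrC -sum_ord_last Ebc sum_ord_last cn addrCA addrA.
case/wc=> [Erest | [/sum_eq0 b0 | /pos[/sum_eq0 c0 _]]].
- have [d plan_d] : exists d,
      transport_plan m n.+1 b (fun j => if j == n then a else c j) d.
    by apply: Tmn; rewrite sum_if_last Erest.
  by eexists; exact: transport_plan_corner plan_d.
- by eexists; exact: transport_plan_last_row.
- by eexists; apply/transport_plan_tr/transport_plan_last_row.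
Qed.

Hypothesis tot : totally_canonically_preordered K.

Lemma transportable_all m n : transportable m n.
Proof.
elim: m n => [|m IHm] n; first exact: transportable0n.
elim: n => [|n IHn]; first exact/transportable_tr/transportable0n.
move=> b c Ebc; case: (tot (b m) (c n)) => [[a bm_le] | [a cn_le]].
  exact: transportable_corner (IHm _) Ebc (esym bm_le).
have [d /transport_plan_tr plan_d] :=
  transportable_corner (transportable_tr IHn) (esym Ebc) (esym cn_le).
by eexists; exact: plan_d.
Qed.

End Positive.

Lemma transportable_ord m n : transportable m.+1 n.+1 ->
  forall (b : 'I_m.+1 -> K) (c : 'I_n.+1 -> K),
    \sum_i b i = \sum_j c j ->
    exists d : 'I_m.+1 -> 'I_n.+1 -> K,
      (forall i, \sum_j d i j = b i) /\ (forall j, \sum_i d i j = c j).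
Proof.
move=> Tmn b c Ebc.
have [d [rows cols]] : exists d,
    transport_plan m.+1 n.+1 (fun i => b (inord i)) (fun j => c (inord j)) d.
  by apply: Tmn; rewrite !(eq_bigr _ (fun k _ => congr1 _ (inord_val k))).
exists (fun i j => d i j); split.
  by move=> i; rewrite rows // inord_val.
by move=> j; rewrite cols // inord_val.
Qed.

End TransportPlans.

Theorem proposition23 (K : nmodType) :
  positive_monoid K ->
  weakly_cancellative K ->
  totally_canonically_preordered K ->
  transportation_property K.
Proof.
move=> pos wc tot [//|m] [//|n] _ _.
exact/transportable_ord/transportable_all.
Qed.
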